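(* Let $\psi:\mathbb{N}\to(0,\infty)$ satisfy: (I) there exists $c>0$ such that for all $n\ge1$ and all integers $k\in[n,2n]$, $\psi(k)=\psi(n)\{1+O((\log n)^{-c})\}$; (II) there exists $\epsilon>0$ such that for all $n\ge1$, $\psi(2n)=\psi(n)\Big\{1-\frac{\log 2}{2\log n}+O\big((\log n)^{-1-\epsilon}\big)\Big\}$. Set $\delta=\min\{c,\epsilon\}$. Then there exists $a>0$ such that $$\psi(n)=a(\log n)^{-1/2}\Big\{1+O\big((\log n)^{-\delta}\big)\Big\}.$$ *)

From Stdlib Require Export Reals.
Open Scope R_scope.

(* lnpow n s = (log n)^s, used only for n >= 2 where log n > 0. *)
Definition lnpow (n : nat) (s : R) : R := Rpower (ln (INR n)) s.

From Stdlib Require Import Reals Lra Lia Psatz.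
Open Scope R_scope.

(* Let f(n) = log psi(n) + (1/2) log log n and e(n) = (log n)^-d with d = min(c, eps);
   comparing (I) at k = 2n with (II) forces c <= 1, hence d <= 1. By (II) and
   (1 - x/2) sqrt(1 + x) = 1 + O(x^2) with x = log 2 / log n, the doubling increment
   f(2n) - f(n) is O((log n)^(-1-d)), i.e. at most a constant times the telescoping
   difference e(n) - e(2n); by (I), f oscillates by O(e(n)) on [n, 2n]. Chaining dyadic
   blocks gives |f(m) - f(n)| = O(e(n)) for all m >= n, so f(n) = alpha + O(e(n)) and
   a = exp(alpha) works. *)

Lemma exp_le_mono x y : x <= y -> exp x <= exp y.
Proof.
  intros [Hlt | ->]; [left; exact (exp_increasing _ _ Hlt) | right; reflexivity].
Qed.

Lemma ln_le_mono x y : 0 < x -> x <= y -> ln x <= ln y.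
Proof.
  intros Hx [Hlt | ->]; [left; exact (ln_increasing _ _ Hx Hlt) | right; reflexivity].
Qed.

Lemma ln_le_sub_1 y : 0 < y -> ln y <= y - 1.
Proof.
  intro Hy. pose proof (exp_ineq1_le (ln y)) as H. rewrite exp_ln in H by exact Hy. lra.
Qed.

Lemma one_sub_inv_le_ln y : 0 < y -> 1 - / y <= ln y.
Proof.
  intro Hy. pose proof (ln_le_sub_1 (/ y) (Rinv_0_lt_compat _ Hy)) as H.
  rewrite ln_Rinv in H by exact Hy. lra.
Qed.

Lemma ln_div a b : 0 < a -> 0 < b -> ln (a / b) = ln a - ln b.
Proof.
  intros Ha Hb. unfold Rdiv. rewrite ln_mult, ln_Rinv by (try apply Rinv_0_lt_compat; assumption).
  ring.
Qed.

Lemma Rabs_le_inv a b : Rabs a <= b -> - b <= a <= b.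
Proof. unfold Rabs; destruct (Rcase_abs a); lra. Qed.

Lemma Rabs_ln_le r : Rabs (r - 1) <= / 2 -> Rabs (ln r) <= 2 * Rabs (r - 1).
Proof.
  intro H. apply Rabs_le_inv in H.
  assert (Hr : 0 < r) by lra.
  pose proof (ln_le_sub_1 r Hr). pose proof (one_sub_inv_le_ln r Hr).
  assert (Hinv : r * / r = 1) by (field; lra).
  pose proof (Rinv_0_lt_compat _ Hr).
  apply Rabs_le. destruct (Rle_or_lt 1 r).
  - rewrite Rabs_right by lra. nra.
  - rewrite Rabs_left by lra. nra.
Qed.

Lemma Rabs_exp_sub_1_le t K : Rabs t <= K -> Rabs (exp t - 1) <= exp K * Rabs t.
Proof.
  intro H. apply Rabs_le_inv in H.
  pose proof (exp_ineq1_le K). pose proof (exp_ineq1_le t).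
  destruct (Rle_or_lt 0 t).
  - pose proof (exp_ineq1_le (- t)) as Hneg. rewrite exp_Ropp in Hneg.
    pose proof (exp_pos t).
    assert (Hinv : exp t * / exp t = 1) by (field; lra).
    pose proof (exp_le_mono _ _ (proj2 H)).
    rewrite (Rabs_right (exp t - 1)), (Rabs_right t) by lra. nra.
  - pose proof (exp_le_mono t 0 ltac:(lra)) as Hle. rewrite exp_0 in Hle.
    rewrite (Rabs_left1 (exp t - 1)), (Rabs_left t) by lra. nra.
Qed.

Lemma ln_sqrt y : 0 < y -> ln (sqrt y) = / 2 * ln y.
Proof. intro Hy. rewrite <- Rpower_sqrt by exact Hy. unfold Rpower. apply ln_exp. Qed.

(* With [x = log 2 / log n], [1 - x/2] is the main term of [psi(2n)/psi(n)] in (II) and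
   [sqrt(1 + x) = sqrt(log 2n / log n)]; they cancel up to second order. *)
Lemma Rabs_half_sqrt_sub_1_le x : 0 <= x <= 1 ->
  Rabs ((1 - x / 2) * sqrt (1 + x) - 1) <= x * x.
Proof.
  intro Hx. set (s := sqrt (1 + x)).
  assert (Hs : 0 <= s) by apply sqrt_pos.
  assert (Hss : s * s = 1 + x) by (apply sqrt_sqrt; lra).
  set (u := (1 - x / 2) * s).
  assert (Hu : 0 <= u) by (unfold u; nra).
  assert (Huu : u * u = (1 - x / 2) * (1 - x / 2) * (1 + x)) by (unfold u; nra).
  assert (u <= 1) by nra.
  assert ((1 - x * x) * (1 - x * x) <= u * u).
  { rewrite Huu. assert (0 <= x * x * (5 / 4 + x / 4 - x * x)) by (apply Rmult_le_pos; nra). nra. }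
  assert (1 - x * x <= u) by nra.
  apply Rabs_le; lra.
Qed.

Lemma Rabs_ln_mul_sqrt_le r x eta : 0 <= x <= 1 -> 0 < r ->
  Rabs (r - (1 - x / 2)) <= eta -> x * x + 2 * eta <= / 2 ->
  Rabs (ln r + / 2 * ln (1 + x)) <= 2 * (x * x + 2 * eta).
Proof.
  intros Hx Hr Hre Hsmall. set (s := sqrt (1 + x)).
  assert (Hs : 0 < s) by (apply sqrt_lt_R0; lra).
  assert (Hs2 : s <= 2) by (assert (s * s = 1 + x) by (apply sqrt_sqrt; lra); nra).
  assert (Hrs : Rabs (r * s - 1) <= x * x + 2 * eta).
  { replace (r * s - 1) with (((1 - x / 2) * s - 1) + (r - (1 - x / 2)) * s) by ring.
    eapply Rle_trans; [apply Rabs_triang|].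
    rewrite Rabs_mult, (Rabs_right s) by lra.
    pose proof (Rabs_half_sqrt_sub_1_le x Hx) as Hhalf. fold s in Hhalf.
    pose proof (Rabs_pos (r - (1 - x / 2))). nra. }
  replace (ln r + / 2 * ln (1 + x)) with (ln (r * s))
    by (rewrite ln_mult by lra; unfold s; rewrite ln_sqrt by lra; reflexivity).
  pose proof (Rabs_ln_le (r * s) ltac:(lra)). lra.
Qed.

Lemma one_sub_Rpower_ge x d : 0 < x <= 1 -> 0 < d <= 1 ->
  d * x / 4 <= 1 - Rpower (1 + x) (- d).
Proof.
  intros Hx Hd. pose proof (ln_le_sub_1 (1 + x) ltac:(lra)).
  pose proof (one_sub_inv_le_ln (1 + x) ltac:(lra)).
  assert (/ (1 + x) <= 1 - x / 2).
  { assert ((1 + x) * / (1 + x) = 1) by (field; lra).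
    assert (0 < / (1 + x)) by (apply Rinv_0_lt_compat; lra). nra. }
  unfold Rpower. set (y := d * ln (1 + x)).
  replace (- d * ln (1 + x)) with (- y) by (unfold y; ring).
  assert (d * x / 2 <= y) by (unfold y; nra).
  assert (y <= 1) by (unfold y; nra).
  rewrite exp_Ropp. pose proof (exp_ineq1_le y). pose proof (exp_pos y).
  assert (exp y * / exp y = 1) by (field; lra).
  assert (0 < / exp y) by (apply Rinv_0_lt_compat; lra).
  assert (/ exp y * (1 + y) <= 1) by nra.
  assert (0 <= y) by nra.
  destruct (Rle_or_lt (/ 2) (/ exp y)); nra.
Qed.

Lemma dyadic_cover n m : (1 <= n)%nat -> (n <= m)%nat ->
  exists j, (2 ^ j * n <= m <= 2 * (2 ^ j * n))%nat.
Proof.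
  intros Hn Hm.
  assert (Hbelow : forall j, (m <= 2 ^ j * n)%nat ->
            exists i, (2 ^ i * n <= m <= 2 * (2 ^ i * n))%nat).
  { induction j as [|j IH]; intro Hj.
    - exists 0%nat. simpl in *. lia.
    - destruct (Nat.le_gt_cases m (2 ^ j * n)) as [Hle | Hgt].
      + exact (IH Hle).
      + exists j. rewrite Nat.pow_succ_r' in Hj. lia. }
  apply (Hbelow m). pose proof (Nat.pow_gt_lin_r 2 m ltac:(lia)). nia.
Qed.

Lemma dyadic_chain (f e : nat -> R) (M K : R) (N : nat) :
  (1 <= N)%nat -> 0 <= M -> 0 <= K -> (forall n, 0 <= e n) ->
  (forall n, (N <= n)%nat -> e (2 * n)%nat <= e n) ->
  (forall n, (N <= n)%nat -> Rabs (f (2 * n)%nat - f n) <= M * (e n - e (2 * n)%nat)) ->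
  (forall n k, (N <= n)%nat -> (n <= k <= 2 * n)%nat -> Rabs (f k - f n) <= K * e n) ->
  forall n m, (N <= n)%nat -> (n <= m)%nat -> Rabs (f m - f n) <= (K + M) * e n.
Proof.
  intros HN HM HK He He_double Hdouble Hblock n m Hn Hm.
  assert (Htele : forall j, Rabs (f (2 ^ j * n)%nat - f n) <= M * (e n - e (2 ^ j * n)%nat)
                            /\ e (2 ^ j * n)%nat <= e n).
  { induction j as [|j [IH1 IH2]].
    - rewrite Nat.pow_0_r, Nat.mul_1_l, Rminus_diag, Rabs_R0. lra.
    - replace (2 ^ S j * n)%nat with (2 * (2 ^ j * n))%nat by (rewrite Nat.pow_succ_r'; lia).
      assert (Hj : (N <= 2 ^ j * n)%nat) by (pose proof (Nat.pow_gt_lin_r 2 j); nia).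
      pose proof (Hdouble _ Hj). pose proof (He_double _ Hj).
      split; [|lra].
      replace (f (2 * (2 ^ j * n))%nat - f n)
        with ((f (2 * (2 ^ j * n))%nat - f (2 ^ j * n)%nat) + (f (2 ^ j * n)%nat - f n)) by ring.
      eapply Rle_trans; [apply Rabs_triang|]. lra. }
  destruct (dyadic_cover n m ltac:(lia) Hm) as [j Hj].
  destruct (Htele j) as [Hj1 Hj2].
  assert (HjN : (N <= 2 ^ j * n)%nat) by (pose proof (Nat.pow_gt_lin_r 2 j); nia).
  pose proof (Hblock _ m HjN Hj).
  replace (f m - f n) with ((f m - f (2 ^ j * n)%nat) + (f (2 ^ j * n)%nat - f n)) by ring.
  eapply Rle_trans; [apply Rabs_triang|].
  pose proof (He (2 ^ j * n)%nat). pose proof (He n). nra.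
Qed.

(* The limit is the supremum of the lower envelope [f n - K e n]; no decay of [e] is needed. *)
Lemma cauchy_bound_limit (f e : nat -> R) (K : R) (N : nat) :
  (forall n m, (N <= n)%nat -> (n <= m)%nat -> Rabs (f m - f n) <= K * e n) ->
  exists l, forall n, (N <= n)%nat -> Rabs (f n - l) <= K * e n.
Proof.
  intro Hcauchy.
  assert (Hnonneg : forall n, (N <= n)%nat -> 0 <= K * e n).
  { intros n Hn. pose proof (Hcauchy n n Hn (Nat.le_refl n)). pose proof (Rabs_pos (f n - f n)). lra. }
  set (lower := fun y => exists n, (N <= n)%nat /\ y = f n - K * e n).
  destruct (completeness lower) as [l [Hub Hlub]].
  - exists (f N + K * e N). intros y [n [Hn ->]].
    pose proof (Rabs_le_inv _ _ (Hcauchy N n (Nat.le_refl N) Hn)). pose proof (Hnonneg n Hn). lra.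
  - exists (f N - K * e N), N. split; [lia | reflexivity].
  - exists l. intros n Hn. apply Rabs_le. split.
    + assert (l <= f n + K * e n); [|lra].
      apply Hlub. intros y [m [Hm ->]]. pose proof (Hnonneg m Hm). pose proof (Hnonneg n Hn).
      destruct (Nat.le_gt_cases n m) as [Hnm | Hmn].
      * pose proof (Rabs_le_inv _ _ (Hcauchy n m Hn Hnm)). lra.
      * pose proof (Rabs_le_inv _ _ (Hcauchy m n Hm (Nat.lt_le_incl _ _ Hmn))). lra.
    + assert (f n - K * e n <= l) by (apply Hub; exists n; split; [exact Hn | reflexivity]). lra.
Qed.

Lemma bound_from_eventual (g e : nat -> R) (N : nat) (C : R) :
  (forall n, 0 < e n) -> (forall n, (N <= n)%nat -> Rabs (g n) <= C * e n) ->
  exists C', forall n, Rabs (g n) <= C' * e n.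
Proof.
  intro He. revert C. induction N as [|N IH]; intros C HC.
  - exists C. intro n. apply HC. lia.
  - apply (IH (Rmax C (Rabs (g N) / e N))). intros n Hn.
    pose proof (He n). pose proof (Rmax_l C (Rabs (g N) / e N)).
    pose proof (Rmax_r C (Rabs (g N) / e N)).
    destruct (Nat.eq_dec n N) as [-> | Hne].
    + replace (Rabs (g N)) with (Rabs (g N) / e N * e N) at 1 by (field; lra). nra.
    + pose proof (HC n ltac:(lia)). nra.
Qed.

Lemma ln_INR_pos n : (2 <= n)%nat -> 0 < ln (INR n).
Proof.
  intro Hn. rewrite <- ln_1. apply ln_increasing; [lra|].
  apply le_INR in Hn. simpl in Hn. lra.
Qed.

Lemma one_le_ln_INR n : (3 <= n)%nat -> 1 <= ln (INR n).
Proof.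
  intro Hn. apply le_INR in Hn. simpl in Hn. rewrite <- (ln_exp 1).
  apply ln_le_mono; [apply exp_pos|]. pose proof exp_le_3. lra.
Qed.

Lemma ln_INR_double n : (2 <= n)%nat ->
  ln (INR (2 * n)) = ln (INR n) * (1 + ln 2 / ln (INR n)).
Proof.
  intro Hn. pose proof (ln_INR_pos n Hn). pose proof (lt_0_INR n ltac:(lia)).
  rewrite mult_INR, ln_mult by (simpl; lra). simpl (INR 2).
  replace (1 + 1) with 2 by ring. field. lra.
Qed.

Lemma ln2_div_ln_INR_bounds n : (2 <= n)%nat -> 0 < ln 2 / ln (INR n) <= 1.
Proof.
  intro Hn. pose proof (ln_INR_pos n Hn). pose proof ln_lt_2.
  assert (ln 2 <= ln (INR n)) by (apply ln_le_mono; [lra | apply le_INR in Hn; exact Hn]).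
  split; [apply Rdiv_lt_0_compat; lra|].
  apply (Rmult_le_reg_r (ln (INR n))); [lra|]. field_simplify; lra.
Qed.

Lemma lnln_double n : (2 <= n)%nat ->
  ln (ln (INR (2 * n))) = ln (ln (INR n)) + ln (1 + ln 2 / ln (INR n)).
Proof.
  intro Hn. pose proof (ln_INR_pos n Hn). pose proof (ln2_div_ln_INR_bounds n Hn).
  rewrite ln_INR_double, ln_mult by (auto; lra). reflexivity.
Qed.

Lemma lnln_le n k : (2 <= n)%nat -> (n <= k)%nat -> ln (ln (INR n)) <= ln (ln (INR k)).
Proof.
  intros Hn Hk. pose proof (ln_INR_pos n Hn). apply ln_le_mono; [assumption|].
  apply ln_le_mono; [apply lt_0_INR; lia | apply le_INR, Hk].
Qed.

Lemma lnpow_pos n s : 0 < lnpow n s.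
Proof. apply exp_pos. Qed.

Lemma lnpow_plus n s t : lnpow n (s + t) = lnpow n s * lnpow n t.
Proof. apply Rpower_plus. Qed.

Lemma lnpow_le n s t : (3 <= n)%nat -> s <= t -> lnpow n s <= lnpow n t.
Proof. intros Hn Hst. apply Rle_Rpower; [apply one_le_ln_INR|]; assumption. Qed.

Lemma lnpow_le_1 n s : (3 <= n)%nat -> s <= 0 -> lnpow n s <= 1.
Proof.
  intros Hn Hs. rewrite <- (Rpower_O (ln (INR n))) by (apply ln_INR_pos; lia).
  apply lnpow_le; assumption.
Qed.

Lemma lnpow_opp_1 n : (2 <= n)%nat -> lnpow n (- 1) = / ln (INR n).
Proof.
  intro Hn. unfold lnpow, Rpower. replace (- 1 * ln (ln (INR n))) with (- ln (ln (INR n))) by ring.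
  rewrite exp_Ropp, exp_ln by (apply ln_INR_pos, Hn). reflexivity.
Qed.

Lemma lnpow_double n s : (2 <= n)%nat ->
  lnpow (2 * n) s = lnpow n s * Rpower (1 + ln 2 / ln (INR n)) s.
Proof.
  intro Hn. pose proof (ln_INR_pos n Hn). pose proof (ln2_div_ln_INR_bounds n Hn).
  unfold lnpow. rewrite ln_INR_double, Rpower_mult_distr by (auto; lra). reflexivity.
Qed.

Lemma lnpow_double_le n s : (2 <= n)%nat -> s <= 0 -> lnpow (2 * n) s <= lnpow n s.
Proof.
  intros Hn Hs. pose proof (ln2_div_ln_INR_bounds n Hn).
  rewrite lnpow_double by exact Hn.
  assert (Rpower (1 + ln 2 / ln (INR n)) s <= 1).
  { assert (0 <= ln (1 + ln 2 / ln (INR n))) by (rewrite <- ln_1; apply ln_le_mono; lra).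
    unfold Rpower. rewrite <- exp_0 at 2. apply exp_le_mono. nra. }
  pose proof (lnpow_pos n s). nra.
Qed.

Lemma lnpow_vanishes C s eta : s < 0 -> 0 < eta ->
  exists N, forall n, (N <= n)%nat -> C * lnpow n s <= eta.
Proof.
  intros Hs Heta. destruct (Rle_or_lt C 0) as [HC | HC].
  { exists 0%nat. intros n _. pose proof (lnpow_pos n s). nra. }
  set (T := ln (eta / C) / s).
  destruct (INR_unbounded (exp (exp T) + 2)) as [N HN].
  exists N. intros n Hn. apply le_INR in Hn.
  assert (HlnT : exp T <= ln (INR n)).
  { rewrite <- (ln_exp (exp T)). apply ln_le_mono; [apply exp_pos | lra]. }
  assert (HT : T <= ln (ln (INR n))).
  { rewrite <- (ln_exp T). apply ln_le_mono; [apply exp_pos | exact HlnT]. }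
  assert (Hratio : 0 < eta / C) by (apply Rdiv_lt_0_compat; assumption).
  assert (Hpow : lnpow n s <= eta / C).
  { unfold lnpow, Rpower. rewrite <- (exp_ln (eta / C)) by exact Hratio. apply exp_le_mono.
    replace (ln (eta / C)) with (s * T) by (unfold T; field; lra). nra. }
  apply (Rmult_le_compat_l C) in Hpow; [|lra].
  replace (C * (eta / C)) with eta in Hpow by (field; lra). exact Hpow.
Qed.

Lemma lnpow_gap n d : (2 <= n)%nat -> 0 < d <= 1 ->
  d * ln 2 / 4 * lnpow n (- 1 - d) <= lnpow n (- d) - lnpow (2 * n) (- d).
Proof.
  intros Hn Hd. pose proof (ln_INR_pos n Hn).
  pose proof (ln2_div_ln_INR_bounds n Hn) as Hx. set (x := ln 2 / ln (INR n)) in Hx.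
  pose proof (one_sub_Rpower_ge x d Hx Hd).
  rewrite lnpow_double by exact Hn. fold x.
  replace (- 1 - d) with (- d + - 1) by ring.
  rewrite lnpow_plus, lnpow_opp_1 by exact Hn.
  replace (d * ln 2 / 4 * (lnpow n (- d) * / ln (INR n))) with (lnpow n (- d) * (d * x / 4))
    by (unfold x; field; lra).
  pose proof (lnpow_pos n (- d)). nra.
Qed.

Lemma lnln_block_drift n k : (2 <= n)%nat -> (n <= k <= 2 * n)%nat ->
  0 <= ln (ln (INR k)) - ln (ln (INR n)) <= ln 2 * lnpow n (- 1).
Proof.
  intros Hn Hk. pose proof (lnln_le n k Hn (proj1 Hk)). pose proof (lnln_le k (2 * n) ltac:(lia) (proj2 Hk)).
  pose proof (ln_INR_pos n Hn). pose proof (ln2_div_ln_INR_bounds n Hn).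
  pose proof (ln_le_sub_1 (1 + ln 2 / ln (INR n)) ltac:(lra)).
  rewrite lnln_double in * by exact Hn. rewrite lnpow_opp_1 by exact Hn.
  unfold Rdiv in *. lra.
Qed.

Lemma Rmult_le_abs_l C p : 0 <= p -> C * p <= Rabs C * p.
Proof. intro Hp. apply Rmult_le_compat_r; [exact Hp | apply Rle_abs]. Qed.

Section RegularlyVarying.

Variables (psi : nat -> R) (c eps C1 C2 : R) (N1 N2 : nat).
Hypothesis psi_pos : forall n : nat, (1 <= n)%nat -> 0 < psi n.
Hypotheses (c_pos : 0 < c) (eps_pos : 0 < eps) (C1_ge0 : 0 <= C1) (C2_ge0 : 0 <= C2).
Hypothesis psi_block : forall n k : nat,
  (N1 <= n)%nat -> (2 <= n)%nat -> (n <= k)%nat -> (k <= 2 * n)%nat ->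
  Rabs (psi k / psi n - 1) <= C1 * lnpow n (- c).
Hypothesis psi_double : forall n : nat,
  (N2 <= n)%nat -> (2 <= n)%nat ->
  Rabs (psi (2 * n)%nat / psi n - (1 - ln 2 / (2 * ln (INR n)))) <= C2 * lnpow n (- 1 - eps).

Local Notation d := (Rmin c eps).

(* With [k = 2n], (I) gives a ratio [1 + O((log n)^-c)] while (II) forces a drift of
   exact order [1 / log n]. *)
Lemma c_le_1 : c <= 1.
Proof.
  apply Rnot_lt_le. intro Hc1. pose proof ln_lt_2.
  destruct (lnpow_vanishes C1 (1 - c) (ln 2 / 8) ltac:(lra) ltac:(lra)) as [Na Ha].
  destruct (lnpow_vanishes C2 (- eps) (ln 2 / 8) ltac:(lra) ltac:(lra)) as [Nb Hb].
  set (n := (N1 + N2 + Na + Nb + 2)%nat).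
  pose proof (Rabs_le_inv _ _ (psi_block n (2 * n) ltac:(lia) ltac:(lia) ltac:(lia) ltac:(lia))).
  pose proof (Rabs_le_inv _ _ (psi_double n ltac:(lia) ltac:(lia))).
  specialize (Ha n ltac:(lia)). specialize (Hb n ltac:(lia)).
  assert (Hinv : ln 2 / (2 * ln (INR n)) = ln 2 / 2 * lnpow n (- 1))
    by (rewrite lnpow_opp_1 by lia; field; apply Rgt_not_eq, ln_INR_pos; lia).
  rewrite Hinv in *.
  replace (- c) with (- 1 + (1 - c)) in * by ring.
  replace (- 1 - eps) with (- 1 + - eps) in * by ring.
  rewrite !lnpow_plus in *.
  pose proof (lnpow_pos n (- 1)). nra.
Qed.

Lemma d_bounds : 0 < d <= 1 /\ d <= c /\ d <= eps.
Proof. pose proof c_le_1. unfold Rmin; destruct (Rle_dec c eps); lra. Qed.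

Definition log_rescaled (n : nat) : R := ln (psi n) + / 2 * ln (ln (INR n)).

Lemma log_rescaled_block : exists K N, 0 <= K /\
  forall n k, (N <= n)%nat -> (n <= k <= 2 * n)%nat ->
  Rabs (log_rescaled k - log_rescaled n) <= K * lnpow n (- d).
Proof.
  destruct d_bounds as [Hd [Hdc Hde]]. pose proof ln_lt_2.
  destruct (lnpow_vanishes C1 (- c) (/ 2) ltac:(lra) ltac:(lra)) as [Nv Hv].
  exists (2 * C1 + ln 2 / 2), (N1 + Nv + 3)%nat. split; [lra|].
  intros n k Hn Hk.
  assert (Hpsi : 0 < psi n /\ 0 < psi k) by (split; apply psi_pos; lia).
  set (r := psi k / psi n).
  assert (Hr : Rabs (r - 1) <= C1 * lnpow n (- c)) by (apply psi_block; lia).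
  pose proof (Rabs_ln_le r ltac:(specialize (Hv n ltac:(lia)); lra)) as Hln.
  pose proof (lnln_block_drift n k ltac:(lia) Hk) as Hdrift.
  assert (Hpow : lnpow n (- c) <= lnpow n (- d) /\ lnpow n (- 1) <= lnpow n (- d))
    by (split; apply lnpow_le; lia || lra).
  replace (log_rescaled k - log_rescaled n)
    with (ln r + / 2 * (ln (ln (INR k)) - ln (ln (INR n)))).
  2:{ unfold log_rescaled, r. rewrite ln_div by lra. ring. }
  eapply Rle_trans; [apply Rabs_triang|].
  rewrite Rabs_mult, (Rabs_right (/ 2)), (Rabs_right (_ - _)) by lra.
  nra.
Qed.

Lemma log_rescaled_double_increment : exists K N, 0 <= K /\
  forall n, (N <= n)%nat ->
  Rabs (log_rescaled (2 * n) - log_rescaled n) <= K * lnpow n (- 1 - d).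
Proof.
  destruct d_bounds as [Hd [Hdc Hde]]. pose proof ln_lt_2.
  set (K1 := ln 2 * ln 2 + 2 * C2).
  destruct (lnpow_vanishes K1 (- 1 - d) (/ 2) ltac:(lra) ltac:(lra)) as [Nv Hv].
  exists (2 * K1), (N2 + Nv + 3)%nat. split; [unfold K1; nra|]. intros n Hn.
  assert (Hpsi : 0 < psi n /\ 0 < psi (2 * n)%nat) by (split; apply psi_pos; lia).
  pose proof (ln_INR_pos n ltac:(lia)).
  set (x := ln 2 / ln (INR n)).
  pose proof (ln2_div_ln_INR_bounds n ltac:(lia)) as Hx. fold x in Hx.
  set (r := psi (2 * n)%nat / psi n).
  set (eta := C2 * lnpow n (- 1 - d)).
  assert (Hr : Rabs (r - (1 - x / 2)) <= eta).
  { replace (x / 2) with (ln 2 / (2 * ln (INR n))) by (unfold x; field; lra).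
    eapply Rle_trans; [apply psi_double; lia|].
    apply Rmult_le_compat_l; [lra | apply lnpow_le; lia || lra]. }
  assert (Hxx : x * x <= ln 2 * ln 2 * lnpow n (- 1 - d)).
  { replace (x * x) with (ln 2 * ln 2 * lnpow n (- 1 + - 1))
      by (rewrite lnpow_plus, lnpow_opp_1 by lia; unfold x; field; lra).
    apply Rmult_le_compat_l; [nra | apply lnpow_le; lia || lra]. }
  replace (log_rescaled (2 * n) - log_rescaled n) with (ln r + / 2 * ln (1 + x)).
  2:{ unfold log_rescaled, r, x. rewrite lnln_double, ln_div by lia || lra. ring. }
  assert (Hsum : x * x + 2 * eta <= K1 * lnpow n (- 1 - d)) by (unfold eta, K1; lra).
  specialize (Hv n ltac:(lia)).
  assert (Hr0 : 0 < r) by (apply Rdiv_lt_0_compat; lra).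
  pose proof (Rabs_ln_mul_sqrt_le r x eta ltac:(lra) Hr0 Hr ltac:(lra)). lra.
Qed.

Lemma log_rescaled_limit : exists l K N, 0 <= K /\ (3 <= N)%nat /\
  forall n, (N <= n)%nat -> Rabs (log_rescaled n - l) <= K * lnpow n (- d).
Proof.
  destruct d_bounds as [Hd _]. pose proof ln_lt_2.
  destruct log_rescaled_double_increment as [K1 [Na [HK1 Hinc]]].
  destruct log_rescaled_block as [K2 [Nb [HK2 Hblock]]].
  set (M := 4 * K1 / (d * ln 2)).
  assert (HM : 0 <= M) by (unfold M; apply Rmult_le_pos; [lra | apply Rlt_le, Rinv_0_lt_compat; nra]).
  set (N := (Na + Nb + 3)%nat).
  assert (Hdouble : forall n, (N <= n)%nat ->
    Rabs (log_rescaled (2 * n) - log_rescaled n) <= M * (lnpow n (- d) - lnpow (2 * n) (- d))).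
  { intros n Hn. eapply Rle_trans; [apply Hinc; lia|].
    replace (K1 * lnpow n (- 1 - d)) with (M * (d * ln 2 / 4 * lnpow n (- 1 - d)))
      by (unfold M; field; lra).
    apply Rmult_le_compat_l; [exact HM | apply lnpow_gap; lia || lra]. }
  assert (Hcauchy := dyadic_chain log_rescaled (fun n => lnpow n (- d)) M K2 N ltac:(lia) HM HK2
    (fun n => Rlt_le _ _ (lnpow_pos n (- d)))
    (fun n Hn => lnpow_double_le n (- d) ltac:(lia) ltac:(lra))
    Hdouble (fun n k Hn => Hblock n k ltac:(lia))).
  destruct (cauchy_bound_limit _ _ _ _ Hcauchy) as [l Hl].
  exists l, (K2 + M), N. repeat split; [lra | lia | exact Hl].
Qed.

Lemma psi_asymptotic : exists a, 0 < a /\ exists C N, forall n, (N <= n)%nat ->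
  Rabs (psi n / (a * lnpow n (- (1 / 2))) - 1) <= C * lnpow n (- d).
Proof.
  destruct d_bounds as [Hd _].
  destruct log_rescaled_limit as [l [K [N [HK [HN Hl]]]]].
  exists (exp l). split; [apply exp_pos|]. exists (exp K * K), N. intros n Hn.
  assert (Hpsi : 0 < psi n) by (apply psi_pos; lia).
  replace (psi n / (exp l * lnpow n (- (1 / 2)))) with (exp (log_rescaled n - l)).
  2:{ unfold log_rescaled, lnpow, Rpower.
      replace (ln (psi n) + / 2 * ln (ln (INR n)) - l)
        with (ln (psi n) + (- l + - (- (1 / 2) * ln (ln (INR n))))) by field.
      rewrite !exp_plus, !exp_Ropp, exp_ln by exact Hpsi.
      field. split; apply Rgt_not_eq, exp_pos. }
  pose proof (Hl n Hn). pose proof (lnpow_pos n (- d)).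
  pose proof (lnpow_le_1 n (- d) ltac:(lia) ltac:(lra)).
  eapply Rle_trans; [apply Rabs_exp_sub_1_le with (K := K); nra|].
  pose proof (exp_pos K). nra.
Qed.

End RegularlyVarying.

Theorem lemma3p1 (psi : nat -> R) (c eps : R)
  (Hpos : forall n : nat, (1 <= n)%nat -> 0 < psi n)
  (Hc : 0 < c) (Heps : 0 < eps)
  (HI : exists (C : R) (N : nat), forall n k : nat,
      (N <= n)%nat -> (2 <= n)%nat -> (n <= k)%nat -> (k <= 2 * n)%nat ->
      Rabs (psi k / psi n - 1) <= C * lnpow n (- c))
  (HII : exists (C : R) (N : nat), forall n : nat,
      (N <= n)%nat -> (2 <= n)%nat ->
      Rabs (psi (2 * n)%nat / psi n - (1 - ln 2 / (2 * ln (INR n))))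
        <= C * lnpow n (- 1 - eps)) :
  exists a : R, 0 < a /\
    exists C : R, forall n : nat, (2 <= n)%nat ->
      Rabs (psi n / (a * lnpow n (- (1/2))) - 1) <= C * lnpow n (- Rmin c eps).
Proof.
  destruct HI as [C1 [N1 HI]], HII as [C2 [N2 HII]].
  assert (HI' : forall n k, (N1 <= n)%nat -> (2 <= n)%nat -> (n <= k)%nat -> (k <= 2 * n)%nat ->
      Rabs (psi k / psi n - 1) <= Rabs C1 * lnpow n (- c)).
  { intros. eapply Rle_trans; [apply HI; assumption | apply Rmult_le_abs_l, Rlt_le, lnpow_pos]. }
  assert (HII' : forall n, (N2 <= n)%nat -> (2 <= n)%nat ->
      Rabs (psi (2 * n)%nat / psi n - (1 - ln 2 / (2 * ln (INR n))))
        <= Rabs C2 * lnpow n (- 1 - eps)).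
  { intros. eapply Rle_trans; [apply HII; assumption | apply Rmult_le_abs_l, Rlt_le, lnpow_pos]. }
  destruct (psi_asymptotic psi c eps (Rabs C1) (Rabs C2) N1 N2 Hpos Hc Heps
              (Rabs_pos C1) (Rabs_pos C2) HI' HII') as [a [Ha [C [N Hbound]]]].
  destruct (bound_from_eventual _ _ N C (fun n => lnpow_pos n (- Rmin c eps)) Hbound) as [C' HC'].
  exists a. split; [exact Ha|]. exists C'. intros n _. apply HC'.
Qed.
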